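(* Assume $E\setminus T\ne\emptyset$. For $e\in E\setminus T$ let $\hat c_e=c_e/\|c_e\|_R$. Then for every circulation $g\in\mathbb{R}^E$ (i.e. $B^Tg=0$), \[ \sum_{e\in E\setminus T}p_e\big(g^TR\hat c_e\big)^2\ge\frac{\|g\|_R^2}{\tau}. \]
   Context: Let $G=(V,E,w)$ be a connected undirected graph with resistances $r_e=1/w_e>0$ and fixed edge orientations $(a,b)$. The incidence matrix $B\in\mathbb{R}^{E\times V}$ has $B_{(a,b),c}=1$ if $c=a$, $-1$ if $c=b$, $0$ otherwise; $R=\mathrm{diag}(r_e)_{e\in E}$ and $\|x\|_R=\sqrt{x^TRx}$. Let $T\subseteq E$ be a spanning tree. For vertices $a,b$, $\pi_{(a,b)}\in\mathbb{R}^E$ is the unit flow from $a$ to $b$ along the unique $a$–$b$ path in $T$. For $e=(a,b)\in E\setminus T$, $c_e=\mathbf{1}_e-\pi_{(a,b)}$ and $R_e=c_e^TRc_e$. The tree condition number is $\tau=\sum_{e\in E\setminus T}R_e/r_e$ and $p_e=\frac{R_e}{r_e\tau}$ for $e\in E\setminus T$. *)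

From HB Require Import structures.
From mathcomp Require Import all_boot all_order all_algebra.
Set Implicit Arguments. Unset Strict Implicit. Unset Printing Implicit Defensive.
Import Order.TTheory GRing.Theory Num.Theory.
Local Open Scope ring_scope.

Section Graph.
Variables (V E : finType) (src dst : E -> V).

Definition adj (S : {set E}) : rel V :=
  [rel u v | [exists e in S, ((src e == u) && (dst e == v))
                          || ((src e == v) && (dst e == u))]].

Definition connected_sub (S : {set E}) : Prop :=
  forall u v : V, connect (adj S) u v.

(* spanning tree: a connected spanning subgraph which is minimal, i.e.
   deleting any of its edges disconnects the endpoints of that edge
   (equivalently, connected and acyclic) *)
Definition spanning_tree (T : {set E}) : Prop :=
  connected_sub T /\
  forall e, e \in T -> ~~ connect (adj (T :\ e)) (src e) (dst e).

(* a step of a walk: edge e traversed forward (d = true) or backward *)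
Definition stail (s : E * bool) : V := if s.2 then src s.1 else dst s.1.
Definition shead (s : E * bool) : V := if s.2 then dst s.1 else src s.1.

Fixpoint walk (a b : V) (w : seq (E * bool)) : bool :=
  match w with
  | [::] => a == b
  | s :: w' => (stail s == a) && walk (shead s) b w'
  end.

Definition path_verts (a : V) (w : seq (E * bool)) : seq V := a :: map shead w.

Definition simple_path (S : {set E}) (a b : V) (w : seq (E * bool)) : bool :=
  [&& walk a b w, all (fun s => s.1 \in S) w & uniq (path_verts a w)].

Variable R : rcfType.

Definition walk_flow (w : seq (E * bool)) : E -> R :=
  fun f => \sum_(s <- w) (if s.2 then 1 else -1) * (s.1 == f)%:R.

Definition tree_path_flow (T : {set E}) (a b : V) (pi : E -> R) : Prop :=
  exists w, simple_path T a b w /\ pi = walk_flow w.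

Definition incidence (f : E) (v : V) : R :=
  (v == src f)%:R - (v == dst f)%:R.

Definition circulation (g : E -> R) : Prop :=
  forall v : V, \sum_f incidence f v * g f = 0.

Variable r : E -> R.

Definition dotR (x y : E -> R) : R := \sum_f x f * r f * y f.

Variable pi : V -> V -> E -> R.

Definition cvec (e : E) : E -> R :=
  fun f => (f == e)%:R - pi (src e) (dst e) f.

Definition Reff (e : E) : R := dotR (cvec e) (cvec e).

Variable T : {set E}.

Definition tau : R := \sum_(e | e \notin T) Reff e / r e.

Definition prob (e : E) : R := Reff e / (r e * tau).

Definition chat (e : E) : E -> R := fun f => cvec e f / Num.sqrt (dotR (cvec e) (cvec e)).

End Graph.

From HB Require Import structures.
From mathcomp Require Import all_boot all_order all_algebra.
From mathcomp Require Import ring lra.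
Set Implicit Arguments. Unset Strict Implicit. Unset Printing Implicit Defensive.
Import Order.TTheory GRing.Theory Num.Theory.
Local Open Scope ring_scope.

(* Write x_e = g^T R c_e for the off-tree edges e.
   1. Flows: the unit flow along a walk from a to b has divergence 1_a - 1_b,
      and a circulation supported on an edge set all of whose edges are
      bridges vanishes (look at the flux out of one side of the bridge).
   2. Hence each c_e is a circulation equal to the indicator of e off the
      tree, and every circulation g decomposes as g = sum_{e notin T} g_e c_e
      (the difference is a circulation supported on the tree).  Taking the
      R-inner product with g gives ||g||_R^2 = sum_{e notin T} g_e x_e.
   3. Since c_e(e) = 1, R_e >= r_e > 0, so tau > 0 and each summand of the
      left-hand side equals x_e^2 / (r_e tau).
   4. The pointwise inequality x^2/r >= 2 g x - r g^2, summed over the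
      off-tree edges, gives sum x_e^2/r_e >= 2||g||^2 - ||g||^2 = ||g||^2. *)

Lemma sum_mul_delta (R : nzRingType) (I : finType) (F : I -> R) (a : I) :
  \sum_i F i * (a == i)%:R = F a.
Proof.
rewrite (bigD1 a) //= eqxx mulr1 big1 ?addr0 // => i /negbTE.
by rewrite eq_sym => ->; rewrite mulr0.
Qed.

(* The elementary inequality behind the bound, summed over a set:
   2 a b - r a^2 <= b^2 / r whenever r > 0, i.e. (r a - b)^2 / r >= 0. *)
Lemma weighted_square_bound (R : realFieldType) (I : finType) (P : pred I)
    (w a b : I -> R) :
  (forall i, P i -> 0 < w i) ->
  2 * \sum_(i | P i) a i * b i - \sum_(i | P i) w i * a i ^+ 2
    <= \sum_(i | P i) b i ^+ 2 / w i.
Proof.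
move=> wpos; rewrite mulr_sumr -sumrB; apply: ler_sum => i Pi.
have wi := wpos i Pi.
have expand : (w i * a i - b i) ^+ 2 / w i
               = b i ^+ 2 / w i - (2 * (a i * b i) - w i * a i ^+ 2).
  by field; rewrite gt_eqF.
by rewrite -subr_ge0 -expand divr_ge0 ?sqr_ge0 ?ltW.
Qed.

Section Flows.
Variables (R : rcfType) (V E : finType) (src dst : E -> V).

Local Notation inc := (incidence src dst R).

Lemma walk_flow_divergence (w : seq (E * bool)) (a b : V) :
  walk src dst a b w ->
  forall v, \sum_f inc f v * walk_flow R w f = (v == a)%:R - (v == b)%:R.
Proof.
elim: w a => [|[e d] w IH] a /=.
  move=> /eqP -> v; rewrite subrr; apply: big1 => f _.
  by rewrite /walk_flow big_nil mulr0.
move=> /andP [/eqP ha hw] v.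
have -> : \sum_f inc f v * walk_flow R ((e, d) :: w) f =
    (if d then 1 else -1) * inc e v + \sum_f inc f v * walk_flow R w f.
  rewrite -(@sum_mul_delta R E (fun f => (if d then 1 else -1) * inc f v)) -big_split.
  apply: eq_bigr => f _; rewrite /walk_flow big_cons /=; ring.
rewrite (IH _ hw) -ha /stail /shead /incidence.
by case: d {ha hw} => /=; ring.
Qed.

Lemma walk_flow_outside (S : {set E}) (w : seq (E * bool)) (f : E) :
  all (fun s => s.1 \in S) w -> f \notin S -> walk_flow R w f = 0.
Proof.
move=> /allP wS fS; rewrite /walk_flow big_seq big1 // => s /wS sS.
have /negbTE -> : s.1 != f by apply: contraNneq fS => <-.
by rewrite mulr0.
Qed.

Lemma divergence_sum (C : {set V}) (h : E -> R) :
  \sum_(v in C) \sum_f inc f v * h f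
    = \sum_f ((src f \in C)%:R - (dst f \in C)%:R) * h f.
Proof.
have inC x : \sum_(v in C) (v == x)%:R = (x \in C)%:R :> R.
  rewrite big_mkcond (bigD1 x) //= eqxx big1 ?addr0; first by case: (x \in C).
  by move=> v /negbTE ->; case: (v \in C).
rewrite exchange_big; apply: eq_bigr => f _.
by rewrite -mulr_suml /incidence sumrB !inC.
Qed.

(* A circulation supported on an edge set S in which every edge is a bridge
   (e.g. the edges of a spanning tree) vanishes: the flux out of the side of
   a bridge f containing src f is exactly h f. *)
Lemma circulation_on_bridges (S : {set E}) (h : E -> R) :
  (forall e, e \in S -> ~~ connect (adj src dst (S :\ e)) (src e) (dst e)) ->
  circulation src dst h -> (forall f, f \notin S -> h f = 0) ->
  forall f, h f = 0.
Proof.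
move=> bridge hcirc hout f.
have [fS|] := boolP (f \in S); last exact: hout.
set C := [set v | connect (adj src dst (S :\ f)) (src f) v].
have : \sum_(v in C) \sum_k inc k v * h k = 0 by apply: big1 => v _; apply: hcirc.
rewrite divergence_sum (bigD1 f) //= big1 ?addr0.
  have srcC : src f \in C by rewrite inE connect0.
  have dstC : dst f \in C = false by rewrite inE; apply/negbTE/bridge.
  by rewrite srcC dstC subr0 mul1r.
move=> k kf; have [kS|/hout ->] := boolP (k \in S); last by rewrite mulr0.
have kSf : k \in S :\ f by rewrite !inE kf.
have fwd : adj src dst (S :\ f) (src k) (dst k).
  by apply/existsP; exists k; rewrite kSf !eqxx.
have bwd : adj src dst (S :\ f) (dst k) (src k).
  by apply/existsP; exists k; rewrite kSf !eqxx orbT.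
have -> : (dst k \in C) = (src k \in C).
  rewrite !inE; apply/idP/idP => H.
    exact: connect_trans H (connect1 bwd).
  exact: connect_trans H (connect1 fwd).
by rewrite subrr mul0r.
Qed.

End Flows.

Section FundamentalCycles.
Variables (R : rcfType) (V E : finType) (src dst : E -> V).
Variables (T : {set E}) (pi : V -> V -> E -> R).
Hypothesis T_bridges :
  forall e, e \in T -> ~~ connect (adj src dst (T :\ e)) (src e) (dst e).
Hypothesis pi_tree : forall a b, tree_path_flow src dst T a b (pi a b).

Local Notation c := (cvec src dst pi).

Lemma tree_flow_offtree (a b : V) (f : E) : f \notin T -> pi a b f = 0.
Proof.
have [w [/and3P [_ wT _] ->]] := pi_tree a b.
exact: walk_flow_outside wT.
Qed.

Lemma cvec_offtree (e f : E) : f \notin T -> c e f = (f == e)%:R.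
Proof. by move=> fT; rewrite /cvec tree_flow_offtree // subr0. Qed.

Lemma cvec_circulation (e : E) : circulation src dst (c e).
Proof.
move=> v; rewrite /cvec.
under eq_bigr => f _ do rewrite mulrBr.
have [w [/and3P [hw _ _] ->]] := pi_tree (src e) (dst e).
rewrite sumrB (walk_flow_divergence R hw).
under eq_bigr => f _ do rewrite eq_sym.
by rewrite sum_mul_delta /incidence subrr.
Qed.

Lemma circulation_decomposition (g : E -> R) :
  circulation src dst g -> forall f, g f = \sum_(e | e \notin T) g e * c e f.
Proof.
move=> hg f; apply/eqP; rewrite -subr_eq0; apply/eqP.
pose h f := g f - \sum_(e | e \notin T) g e * c e f.
apply: (circulation_on_bridges (h := h) T_bridges) => [v | k kT]; rewrite /h.
  under eq_bigr => k _ do rewrite mulrBr mulr_sumr.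
  rewrite sumrB hg sub0r exchange_big big1 ?oppr0 //= => e _.
  under eq_bigr => k _ do rewrite mulrCA.
  by rewrite -mulr_sumr cvec_circulation mulr0.
rewrite (bigD1 k) //= big1 ?addr0.
  by rewrite cvec_offtree // eqxx mulr1 subrr.
by move=> e /andP [_ ek]; rewrite cvec_offtree // eq_sym (negbTE ek) mulr0.
Qed.

Variable r : E -> R.
Hypothesis r_pos : forall e, 0 < r e.

Lemma energy_decomposition (g : E -> R) :
  circulation src dst g ->
  dotR r g g = \sum_(e | e \notin T) g e * dotR r g (c e).
Proof.
move=> hg; rewrite {1}/dotR.
under eq_bigr => f _ do rewrite {2}(circulation_decomposition hg f) mulr_sumr.
rewrite exchange_big /=; apply: eq_bigr => e _.
rewrite /dotR mulr_sumr; apply: eq_bigr => f _; ring.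
Qed.

Lemma energy_restrict_le (P : pred E) (g : E -> R) :
  \sum_(e | P e) r e * g e ^+ 2 <= dotR r g g.
Proof.
rewrite /dotR big_mkcond /=; apply: ler_sum => e _.
have -> : g e * r e * g e = r e * g e ^+ 2 by ring.
by case: ifP => // _; rewrite mulr_ge0 ?sqr_ge0 ?ltW.
Qed.

(* Since c_e(e) = 1, the resistance of an off-tree fundamental cycle is at
   least that of its own edge. *)
Lemma r_le_Reff (e : E) : e \notin T -> r e <= Reff src dst r pi e.
Proof.
move=> eT; rewrite /Reff /dotR (bigD1 e) //= cvec_offtree // eqxx mul1r mulr1.
rewrite lerDl; apply: sumr_ge0 => f _.
by rewrite mulrAC -expr2 mulr_ge0 ?sqr_ge0 ?ltW.
Qed.

Lemma Reff_gt0 (e : E) : e \notin T -> 0 < Reff src dst r pi e.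
Proof. by move=> eT; exact: lt_le_trans (r_pos e) (r_le_Reff eT). Qed.

Lemma tau_gt0 : (exists e, e \notin T) -> 0 < tau src dst r pi T.
Proof.
move=> [e0 e0T]; rewrite /tau (bigD1 e0) //=.
rewrite ltr_pwDl ?divr_gt0 ?Reff_gt0 //; apply: sumr_ge0 => e /andP [eT _].
by rewrite divr_ge0 ?ltW ?Reff_gt0.
Qed.

Lemma prob_times_sqr_corr (g : E -> R) (e : E) : e \notin T ->
  prob src dst r pi T e * dotR r g (chat src dst r pi e) ^+ 2
    = dotR r g (c e) ^+ 2 / r e / tau src dst r pi T.
Proof.
move=> eT; have Re := Reff_gt0 eT.
have -> : dotR r g (chat src dst r pi e)
          = dotR r g (c e) / Num.sqrt (Reff src dst r pi e).
  by rewrite /dotR /chat mulr_suml; apply: eq_bigr => f _; rewrite mulrA.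
rewrite expr_div_n sqr_sqrtr ?ltW // /prob invfM.
(* tau may be treated as an opaque factor; it need not be nonzero here *)
set t := (tau src dst r pi T)^-1.
by field; rewrite !gt_eqF.
Qed.

End FundamentalCycles.

Theorem lemma9p1 (R : rcfType) (V E : finType) (src dst : E -> V)
  (r : E -> R) (T : {set E}) (pi : V -> V -> E -> R)
  (hloop : forall e, src e != dst e)
  (hconn : connected_sub src dst [set: E])
  (hr : forall e, 0 < r e)
  (hT : spanning_tree src dst T)
  (hpi : forall a b, tree_path_flow src dst T a b (pi a b))
  (hnonempty : exists e, e \notin T)
  (g : E -> R) (hg : circulation src dst g) :
  \sum_(e | e \notin T)
      prob src dst r pi T e * (dotR r g (chat src dst r pi e)) ^+ 2
    >= dotR r g g / tau src dst r pi T.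
Proof.
set x := fun e => dotR r g (cvec src dst pi e).
rewrite (eq_bigr (fun e => x e ^+ 2 / r e / tau src dst r pi T)); last first.
  by move=> e eT; apply: prob_times_sqr_corr.
have tau_pos := tau_gt0 hpi hr hnonempty.
rewrite -mulr_suml ler_pM2r ?invr_gt0 //.
have energy := energy_decomposition hT.2 hpi r hg.
have offtree := energy_restrict_le hr (fun e => e \notin T) g.
have bound :=
  weighted_square_bound (P := fun e => e \notin T) g x (fun e _ => hr e).
rewrite -energy in bound; lra.
Qed.
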